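(* Let $r$ be a rational number with $0<r<1$ and $r\neq1/p$ for every integer $p\ge2$, written $r=[m_1,\dots,m_k]$ with $k\ge2$, $m_i\in\mathbb{Z}_{>0}$, $m_k\ge2$, let $n\ge2$ be an integer, and let $(S_1,S_2,S_1,S_2)$ be the decomposition of $CS(r)$ described in the context; put $m=m_1$. (1) If $k$ is even and $s$ is a rational number with $[m_1,\dots,m_k,2n-2]<s<[m_1,\dots,m_{k-1}]$, then $CS(s)$ contains $(m,S_{1e},d\langle S_2,S_1\rangle,S_2,S_{1b},m)$ as a subsequence for some integer $d$ with $1\le d\le 2n-3$, where $(m+1,S_{1e})=(S_{1b},m+1)=S_1$. (2) If $k$ is odd and $s$ is a rational number with $[m_1,\dots,m_{k-1}]<s<[m_1,\dots,m_k,2n-2]$, then $CS(s)$ contains $(m+1,S_{2e},d\langle S_1,S_2\rangle,S_1,S_{2b},m+1)$ as a subsequence for some integer $d$ with $1\le d\le 2n-3$, where $(m,S_{2e})=(S_{2b},m)=S_2$.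
   Context: Continued fractions: $[m_1,\dots,m_k]=1/(m_1+1/(m_2+\cdots+1/m_k))$; when $k-1=1$, $[m_1,\dots,m_{k-1}]=1/m_1$. For $s\in\mathbb{Q}\cup\{\infty\}$, $u_s$ is the cyclically reduced, cyclically alternating word in the free group $F(a,b)$ representing the simple loop of slope $s$ on the 4-punctured 2-bridge sphere in the upper tangle complement (well defined up to cyclic permutation and inversion). For a cyclically reduced cyclic word $(w)$, decompose it cyclically into maximal subwords alternately positive (all exponents $+1$) and negative (all exponents $-1$); $CS(w)$ is the cyclic sequence of their lengths, and $CS(s):=CS(u_s)$. $CS(r)$ consists of $m$ and $m+1$ and has a decomposition $CS(r)=((S_1,S_2,S_1,S_2))$ in which each $S_i$ is symmetric (equal to its reverse) and occurs only twice in $CS(r)$, $S_1$ begins and ends with $m+1$, and $S_2$ begins and ends with $m$; this is the decomposition meant. $d\langle A,B\rangle$ denotes $(A,B,\dots,A,B)$ with $d$ copies of $(A,B)$. ''Contains as a subsequence'' means occurs as a block of consecutive terms of the cyclic sequence. *)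

From HB Require Import structures.
From mathcomp Require Import all_boot all_order all_algebra.
Set Implicit Arguments. Unset Strict Implicit. Unset Printing Implicit Defensive.
Import Order.TTheory GRing.Theory Num.Theory.

(* Continued fraction [m_1,...,m_k] = 1/(m_1 + 1/(m_2 + ... + 1/m_k)).
   With cf [::] = 0 we get cf [:: m] = 1/m, as in the paper. *)
Definition cf (ms : seq nat) : rat :=
  foldr (fun (m : nat) (x : rat) => ((m%:R : rat) + x)^-1)%R 0%R ms.

(* A word in F(a,b) as a list of letters (is_a, exponent_is_+1). *)
Definition word := seq (bool * bool).

(* u_{q/p} (0 < q < p coprime): the cyclically alternating word
   a^{e_1} b^{e_2} a^{e_3} ... b^{e_{2p}}, e_i = (-1)^{floor((i-1)q/p)}. *)
Definition uword (q p : nat) : word :=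
  [seq (~~ odd i, ~~ odd ((i * q) %/ p)) | i <- iota 0 (2 * p)].

Definition u_s (s : rat) : word := uword `|numq s|%N `|denq s|%N.

Fixpoint runs_aux (b : bool) (c : nat) (l : seq bool) : seq nat :=
  match l with
  | [::] => [:: c]
  | x :: l' => if x == b then runs_aux b c.+1 l' else c :: runs_aux x 1 l'
  end.

Definition runs (l : seq bool) : seq nat :=
  if l is x :: l' then runs_aux x 1 l' else [::].

(* cyclic run lengths: cut the cyclic sequence at the first run boundary *)
Definition cyc_runs (l : seq bool) : seq nat :=
  let n := size l in
  let i := find (fun j => nth false l j != nth false l ((j + n).-1 %% n))
                (iota 0 n) in
  runs (rot i l).

(* CS(w): cyclic sequence (represented by a linear representative, up to
   rotation) of lengths of maximal positive / negative subwords. *)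
Definition CSw (w : word) : seq nat := cyc_runs (map snd w).
Definition CS (s : rat) : seq nat := CSw (u_s s).

Definition cyc_occ (cs b : seq nat) : nat :=
  count (fun i => prefix b (rot i cs)) (iota 0 (size cs)).

Definition cyc_contains (cs b : seq nat) : bool :=
  has (fun i => prefix b (rot i cs)) (iota 0 (size cs)).

Definition dpair (d : nat) (A B : seq nat) : seq nat := flatten (nseq d (A ++ B)).

From mathcomp Require Import all_boot all_order all_algebra zify ring lra.
Import Order.TTheory GRing.Theory Num.Theory.
Set Implicit Arguments. Unset Strict Implicit. Unset Printing Implicit Defensive.

(* For coprime 0 < a < b, CS(a/b) is the sequence of the 2a run lengths
   ceil((j+1) b / a) - ceil(j b / a), and a block occurs in it as soon as its
   partial sums are balanced for the slope b / a, i.e. the numbers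
   a * (sum of the first k terms) - k * b all lie in one window [G, G + a).
   Write r = N / b0 = [m_1, ..., m_k] and P / Q = [m_1, ..., m_{k-1}], so that
   P b0 - Q N = (-1)^k.  Inside a period of CS(r) the residues of -j b0 mod N
   decide where a block can repeat; since S1 and S2 occur only twice, both
   S1 and S2 must contain the positions of residue 0 and N - 1, which forces
   S1 ++ S2 to be a period of CS(r) starting at a multiple of N, with
   |S1| = P (k even) or N - P (k odd).  A slope s = a / b in the given interval
   has coordinates a = u N + v P with 0 < u < (2n - 2) v; for the d with
   (d - 1) v < u < (d + 1) v, the window made of d + 1 periods followed by S1
   (resp. S2), with its two end terms lowered (resp. raised) by one, is balanced
   for s, hence occurs in CS(s). *)

(** * Runs of the exponent sequence of [u_s] *)

Definition ceildiv (x a : nat) := (x + a.-1) %/ a.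

Lemma ceildiv_leq x a i : 0 < a -> (ceildiv x a <= i) = (x <= i * a).
Proof.
move=> a0; rewrite /ceildiv -ltnS ltn_divLR //.
by apply/idP/idP => H; lia.
Qed.

Lemma ceildiv_unique x a y : 0 < a -> x <= y * a -> y * a < x + a -> ceildiv x a = y.
Proof.
move=> a0 h1 h2; apply/eqP; rewrite eqn_leq ceildiv_leq // h1 /=.
case: y h1 h2 => // y h1 h2; rewrite ltnNge ceildiv_leq //; lia.
Qed.

Lemma leq_mul_ceildiv x a : 0 < a -> x <= ceildiv x a * a.
Proof. by move=> a0; rewrite -ceildiv_leq. Qed.

Lemma ltn_mul_ceildiv x a : 0 < a -> ceildiv x a * a < x + a.
Proof.
move=> a0; case E: (ceildiv x a) => [|c]; first lia.
have : ~~ (ceildiv x a <= c) by rewrite E ltnn.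
by rewrite ceildiv_leq //; lia.
Qed.

Fixpoint blocks (x : bool) (cs : seq nat) : seq bool :=
  if cs is c :: cs' then nseq c x ++ blocks (~~ x) cs' else [::].

Lemma runs_aux_nseq x k c l : runs_aux x k (nseq c x ++ l) = runs_aux x (k + c) l.
Proof.
elim: c k => [|c IH] k /=; first by rewrite addn0.
by rewrite eqxx IH addSnnS.
Qed.

Lemma runs_aux_blocks cs x k : all (fun c => 0 < c) cs ->
  runs_aux x k (blocks (~~ x) cs) = k :: cs.
Proof.
elim: cs x k => [|c cs IH] x k //= /andP[c0 hcs].
case: c c0 => // c _ /=.
rewrite (_ : (~~ x == x) = false); last by case: x.
by rewrite runs_aux_nseq add1n; have := IH (~~ x) c.+1 hcs; rewrite negbK => ->.
Qed.

Lemma runs_blocks x cs : all (fun c => 0 < c) cs -> cs != [::] -> runs (blocks x cs) = cs.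
Proof.
case: cs => // c cs /= /andP[c0 hcs] _.
case: c c0 => // c _ /=.
by rewrite runs_aux_nseq add1n runs_aux_blocks.
Qed.

(* The exponent sequence of [uword a b] is constant on the index ranges
   [run_start a b j <= i < run_start a b j.+1], since [i * a %/ b = j] there. *)
Definition run_start (a b j : nat) := ceildiv (j * b) a.
Definition run_len (a b j : nat) := run_start a b j.+1 - run_start a b j.

Lemma run_start_mono a b i j : 0 < a -> i <= j -> run_start a b i <= run_start a b j.
Proof. by move=> a0 ij; rewrite /run_start /ceildiv leq_div2r //; nia. Qed.

Lemma run_start_ltnS a b j : 0 < a -> a <= b -> run_start a b j < run_start a b j.+1.
Proof.
move=> a0 ab; rewrite ltnNge ceildiv_leq //.
have := @ltn_mul_ceildiv (j * b) a a0; have := @leq_mul_ceildiv (j.+1 * b) a a0.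
rewrite -/(run_start a b j) -/(run_start a b j.+1); nia.
Qed.

Lemma run_len_gt0 a b j : 0 < a -> a <= b -> 0 < run_len a b j.
Proof. by move=> a0 ab; rewrite subn_gt0 run_start_ltnS. Qed.

Lemma run_start0 a b : 0 < a -> run_start a b 0 = 0.
Proof. by move=> a0; apply: ceildiv_unique. Qed.

Lemma run_start_addr a b x : 0 < a -> run_start a b (x + a) = run_start a b x + b.
Proof.
move=> a0; rewrite /run_start /ceildiv mulnDl (mulnC a b) -addnA (addnC (b * a)) addnA.
by rewrite divnDMl.
Qed.

Lemma run_start_mull a b c : 0 < a -> run_start a b (c * a) = c * b.
Proof. by move=> a0; apply: ceildiv_unique => //; nia. Qed.

Lemma map_iota_const (f : nat -> bool) y s n :
  (forall i, s <= i < s + n -> f i = y) -> map f (iota s n) = nseq n y.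
Proof.
elim: n s => [|n IH] s H //=.
by rewrite H ?IH //; [move=> i hi; apply: H|]; lia.
Qed.

Lemma div_run_start a b j i : 0 < a -> 0 < b ->
  run_start a b j <= i < run_start a b j.+1 -> i * a %/ b = j.
Proof.
move=> a0 b0 /andP[]; rewrite /run_start ceildiv_leq // ltnNge ceildiv_leq // -ltnNge.
move=> h1 h2; apply/eqP; rewrite eqn_leq leq_divRL // -ltnS ltn_divLR //; lia.
Qed.

Lemma exponents_blocks a b j0 : 0 < a -> a <= b -> j0 <= 2 * a ->
  [seq ~~ odd (i * a %/ b) | i <- iota (run_start a b j0) (2 * b - run_start a b j0)]
  = blocks (~~ odd j0) [seq run_len a b j | j <- iota j0 (2 * a - j0)].
Proof.
move=> a0 ab; move Et: (2 * a - j0) => t.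
elim: t j0 Et => [|t IH] j0 Et hj.
  by rewrite (_ : j0 = 2 * a) ?run_start_mull ?subnn //; lia.
have hj1 : run_start a b j0.+1 <= 2 * b.
  by rewrite -(@run_start_mull a b 2 a0); apply: run_start_mono => //; lia.
have hs := @run_start_ltnS a b j0 a0 ab.
rewrite (_ : 2 * b - run_start a b j0 = run_len a b j0 + (2 * b - run_start a b j0.+1));
  last by rewrite /run_len; lia.
rewrite iotaD map_cat /= subnKC ?(ltnW hs) // IH; [|lia|lia].
rewrite oddS negbK; congr (_ ++ _).
apply: map_iota_const => i hi.
by rewrite (@div_run_start a b j0) //; [lia|rewrite subnKC ?(ltnW hs) in hi].
Qed.

Lemma cyc_runs_cut0 (l : seq bool) : 0 < size l ->
  nth false l 0 != nth false l (size l).-1 -> cyc_runs l = runs l.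
Proof.
move=> l0 hl; rewrite /cyc_runs; case: (size l) l0 hl => // n _ hl.
by rewrite /= modn_small // (negbTE hl) rot0.
Qed.

Lemma exponents_uword a b :
  map snd (uword a b) = [seq ~~ odd (i * a %/ b) | i <- iota 0 (2 * b)].
Proof. by rewrite /uword -map_comp. Qed.

Lemma CSw_uword a b : 0 < a -> a <= b ->
  CSw (uword a b) = mkseq (run_len a b) (2 * a).
Proof.
move=> a0 ab; have b0 : 0 < b by lia.
rewrite /CSw exponents_uword cyc_runs_cut0 ?size_map ?size_iota; last 2 first.
- by lia.
- rewrite !(nth_map 0) ?size_iota ?nth_iota ?add0n; try lia.
  have -> : (2 * b).-1 * a %/ b = (a.-1).*2.+1.
    apply/eqP; rewrite eqn_leq -ltnS ltn_divLR // leq_divRL //; apply/andP; split; nia.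
  by rewrite mul0n div0n /= odd_double.
have := @exponents_blocks a b 0 a0 ab (leq0n _).
rewrite run_start0 // !subn0 => ->.
rewrite runs_blocks //.
- by apply/allP => x /mapP[j _ ->]; apply: run_len_gt0.
- by rewrite -size_eq0 size_map size_iota; lia.
Qed.

Lemma num_den_frac (s : rat) : (0 < s < 1)%R ->
  [/\ 0 < `|numq s|%N, `|numq s|%N < `|denq s|%N &
      s = ((`|numq s|%N)%:R / (`|denq s|%N)%:R)%R].
Proof.
move=> /andP[s0 s1].
have hn : (0 < numq s)%R by rewrite numq_gt0.
have hlt : (numq s < denq s)%R.
  have : (s * (denq s)%:~R < (denq s)%:~R)%R by rewrite gtr_pMl // ltr0z.
  by rewrite -numqE ltr_int.
have E := divq_num_den s.
have en : numq s = Posz `|numq s|%N by rewrite gez0_abs // ltW.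
have ed : denq s = Posz `|denq s|%N by rewrite gez0_abs // ltW.
rewrite en ed in E hlt hn.
by split; rewrite -?ltz_nat // -[in LHS]E.
Qed.

Lemma CS_run_len (s : rat) : (0 < s < 1)%R ->
  CS s = mkseq (run_len `|numq s|%N `|denq s|%N) (2 * `|numq s|%N).
Proof. by move=> /num_den_frac[a0 ab _]; rewrite /CS /u_s CSw_uword // ltnW. Qed.

(** * Blocks of periodic sequences *)

Definition periodic (f : nat -> nat) (n : nat) := forall x, f (x + n) = f x.

Section Periodic.
Variables (f : nat -> nat) (n : nat).
Hypothesis fper : periodic f n.

Lemma periodicM q x : f (x + q * n) = f x.
Proof. by elim: q x => [|q IH] x; rewrite ?addn0 // mulSn addnA IH fper. Qed.

Lemma periodic_mod x : f x = f (x %% n).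
Proof. by rewrite {1}(divn_eq x n) addnC periodicM. Qed.

Lemma periodic_modDl j k : f (j %% n + k) = f (j + k).
Proof. by rewrite periodic_mod modnDml -periodic_mod. Qed.

Lemma nth_rot_mkseq j k : j <= n -> k < n -> nth 0 (rot j (mkseq f n)) k = f (j + k).
Proof.
move=> jn kn; rewrite /rot nth_cat size_drop size_mkseq.
case: ltnP => h; first by rewrite nth_drop nth_mkseq //; lia.
rewrite nth_take ?nth_mkseq; try lia.
by rewrite -fper; congr f; lia.
Qed.

Lemma prefix_rot_mkseq j B : j <= n -> size B <= n ->
  (forall k, k < size B -> nth 0 B k = f (j + k)) -> prefix B (rot j (mkseq f n)).
Proof.
move=> jn Bn hB; rewrite prefixE; apply/eqP.
have sz : size (take (size B) (rot j (mkseq f n))) = size B.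
  by rewrite size_takel // size_rot size_mkseq.
apply: (@eq_from_nth _ 0) => // k; rewrite sz => hk.
by rewrite nth_take // nth_rot_mkseq //; [rewrite hB|lia].
Qed.

Lemma cyc_contains_mkseq j B : 0 < n -> size B <= n ->
  (forall k, k < size B -> nth 0 B k = f (j + k)) -> cyc_contains (mkseq f n) B.
Proof.
move=> n0 Bn hB; apply/hasP; exists (j %% n).
  by rewrite mem_iota size_mkseq add0n ltn_mod n0.
apply: prefix_rot_mkseq => // [|k hk]; first by rewrite ltnW // ltn_mod.
by rewrite periodic_modDl hB.
Qed.

Lemma cyc_occ_mkseq_ge3 B j1 j2 j3 : size B <= n ->
  j1 < n -> j2 < n -> j3 < n -> uniq [:: j1; j2; j3] ->
  (forall j k, j \in [:: j1; j2; j3] -> k < size B -> nth 0 B k = f (j + k)) ->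
  3 <= cyc_occ (mkseq f n) B.
Proof.
move=> Bn h1 h2 h3 u hB.
rewrite /cyc_occ -size_filter size_mkseq (_ : 3 = size [:: j1; j2; j3]) //.
apply: uniq_leq_size u _ => x jx.
have xn : x < n by move: jx; rewrite !inE => /or3P[] /eqP ->.
rewrite mem_filter mem_iota add0n xn /= andbT.
by apply: (prefix_rot_mkseq (ltnW xn) Bn) => k; apply: hB.
Qed.

End Periodic.

Lemma run_len_periodic a b : 0 < a -> periodic (run_len a b) a.
Proof. by move=> a0 x; rewrite /run_len -addSn !run_start_addr //; lia. Qed.

Lemma sumn_run_len a b j k : 0 < a ->
  sumn (mkseq (fun i => run_len a b (j + i)) k) = run_start a b (j + k) - run_start a b j.
Proof.
move=> a0; elim: k => [|k IH]; first by rewrite addn0 subnn.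
rewrite -addn1 /mkseq iotaD map_cat sumn_cat -/(mkseq _ k) IH /= add0n addn0.
have := @run_start_mono a b j (j + k) a0 (leq_addr _ _).
have := @run_start_mono a b (j + k) (j + k).+1 a0 (leqnSn _).
by rewrite /run_len addn1 addnS; lia.
Qed.

Local Open Scope ring_scope.

(* With [t * b = -1 (mod a)], the shift [t0 = t * (a - G mod a)] aligns the
   run starts of slope [a / b] with any prescribed balanced partial sums. *)
Lemma run_start_shift (a b : nat) (G : int) : (0 < a)%N -> coprime a b ->
  exists (t0 : nat) (C0 : int), forall k x : nat,
    0 <= a%:Z * x%:Z - (k * b)%:Z - G < a%:Z ->
    (run_start a b (t0 + k))%:Z = x%:Z + C0.
Proof.
move=> a0 cop.
have [t _ /dvdnP[c hc]] := Bezoutl b a0; rewrite (eqP cop) in hc.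
set r := `|(G %% a%:Z)%Z|%N; set q := (G %/ a%:Z)%Z.
have Gr : 0 <= (G %% a%:Z)%Z by rewrite modz_ge0 // eqz_nat -lt0n.
have EG : G = q * a%:Z + r%:Z by rewrite /q /r gez0_abs //; exact: divz_eq.
have ra : (r < a)%N by rewrite -ltz_nat gez0_abs // ltz_mod // eqz_nat -lt0n.
exists (t * (a - r))%N, ((a - r)%:Z * c%:Z - 1 - q) => k x /andP[e0 ea].
set X := x%:Z + _.
have E : ((t * (a - r) + k) * b)%N%:Z = a%:Z * X - (a%:Z * x%:Z - (k * b)%:Z - G).
  have hc' : t%:Z * b%:Z = c%:Z * a%:Z - 1 by rewrite -!PoszM -hc PoszD; ring.
  rewrite EG /X !PoszM PoszD PoszM -subzn ?(ltnW ra) //.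
  by rewrite mulrDl -mulrA (mulrC _ b%:Z) mulrA hc'; ring.
have X0 : 0 <= X.
  by rewrite -(pmulr_rge0 _ (_ : 0 < a%:Z)) ?ltz_nat //; lia.
rewrite -(gez0_abs X0); congr Posz; apply: ceildiv_unique => //.
  by rewrite -lez_nat E (PoszM (absz X)) gez0_abs // mulrC; lia.
by rewrite -ltz_nat PoszD E (PoszM (absz X)) gez0_abs // mulrC; lia.
Qed.

Lemma cyc_contains_balanced (a b : nat) (B : seq nat) (G : int) :
  (0 < a)%N -> (a <= b)%N -> coprime a b -> (size B <= 2 * a)%N ->
  (forall k, (k <= size B)%N ->
     0 <= a%:Z * (sumn (take k B))%:Z - (k * b)%:Z - G < a%:Z) ->
  cyc_contains (mkseq (run_len a b) (2 * a)) B.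
Proof.
move=> a0 ab cop sB hG.
have [t0 [C0 key]] := run_start_shift G a0 cop.
apply: (@cyc_contains_mkseq _ _ (periodicM (run_len_periodic b a0) 2) t0) => //; first lia.
move=> k hk; have k1 := key _ _ (hG k.+1 hk); have k2 := key _ _ (hG k (ltnW hk)).
have := @run_start_mono a b (t0 + k) (t0 + k.+1) a0 (leq_add (leqnn _) (leqnSn _)).
rewrite (take_nth 0%N) // sumn_rcons in k1.
by rewrite /run_len -addnS; lia.
Qed.

Local Close Scope ring_scope.

(** * Continuants *)

(* [cont (0, 1) l] is the pair (numerator, denominator) of
   [cf l], and [cont (1, 0) l] the pair for [l] with its last term removed. *)
Definition cont (i : nat * nat) (l : seq nat) : nat * nat :=
  foldr (fun x pq => (pq.2, x * pq.2 + pq.1)) i l.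
Definition cfnum l := (cont (0, 1) l).1.
Definition cfden l := (cont (0, 1) l).2.
Definition cfnum_prev l := (cont (1, 0) l).1.
Definition cfden_prev l := (cont (1, 0) l).2.

Lemma cont_linear x y l :
  cont (x, y) l = (x * cfnum_prev l + y * cfnum l, x * cfden_prev l + y * cfden l).
Proof.
rewrite /cfnum_prev /cfnum /cfden_prev /cfden.
by elim: l => [|z l IH] /=; [congr pair; lia | rewrite IH /=; congr pair; ring].
Qed.

Lemma cont_rcons i l t : cont i (rcons l t) = cont (i.2, t * i.2 + i.1) l.
Proof. by rewrite /cont foldr_rcons. Qed.

Lemma cfnum_rcons l t : cfnum (rcons l t) = cfnum_prev l + t * cfnum l.
Proof. by rewrite /cfnum cont_rcons cont_linear /=; ring. Qed.

Lemma cfden_rcons l t : cfden (rcons l t) = cfden_prev l + t * cfden l.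
Proof. by rewrite /cfden cont_rcons cont_linear /=; ring. Qed.

Lemma cfnum_prev_rcons l t : cfnum_prev (rcons l t) = cfnum l.
Proof. by rewrite /cfnum_prev cont_rcons cont_linear /=; ring. Qed.

Lemma cfden_prev_rcons l t : cfden_prev (rcons l t) = cfden l.
Proof. by rewrite /cfden_prev cont_rcons cont_linear /=; ring. Qed.

Lemma cont_det l :
  ((cfnum_prev l)%:Z * (cfden l)%:Z - (cfnum l)%:Z * (cfden_prev l)%:Z
   = (-1) ^+ size l)%R.
Proof.
rewrite /cfnum_prev /cfnum /cfden_prev /cfden.
by elim: l => [|x l IH] //=; rewrite exprS -IH !PoszD !PoszM; ring.
Qed.

Lemma cfden_gt0 l : all (fun x => 0 < x) l -> 0 < cfden l.
Proof. by rewrite /cfden; elim: l => //= x l IH /andP[x0 /IH]; nia. Qed.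

Lemma cfnum_gt0 l : all (fun x => 0 < x) l -> l != [::] -> 0 < cfnum l.
Proof. by case: l => // x l /= /andP[_ h] _; apply: cfden_gt0. Qed.

Lemma cfnum_le_den l : all (fun x => 0 < x) l -> cfnum l <= cfden l.
Proof. by case: l => [|x l] //= /andP[x0 hl]; rewrite /cfnum /cfden /=; nia. Qed.

Lemma cfnum_lt_den l : all (fun x => 0 < x) l -> l != [::] -> 2 <= last 0 l ->
  cfnum l < cfden l.
Proof.
case: l => // x [|y l] /= /andP[x0 hl] _; first by rewrite /cfnum /cfden /=; lia.
move=> _; have := @cfnum_gt0 (y :: l) hl isT; have := @cfden_gt0 (y :: l) hl.
by rewrite /cfnum /cfden /=; nia.
Qed.

Lemma cfE l : all (fun x => 0 < x) l -> cf l = ((cfnum l)%:R / (cfden l)%:R)%R.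
Proof.
elim: l => [|x l IH] /=; first by rewrite /cf /cfnum /= mul0r.
move=> /andP[x0 hl]; rewrite /cf /= -/(cf l) IH //.
rewrite /cfnum /cfden /= -/(cfnum l) -/(cfden l).
have q0 := cfden_gt0 hl.
have hq : ((cfden l)%:R != 0 :> rat)%R by rewrite pnatr_eq0 -lt0n.
have hx : ((x * cfden l + cfnum l)%:R != 0 :> rat)%R by rewrite pnatr_eq0 -lt0n; nia.
rewrite natrD natrM in hx *.
by move: hq hx; generalize (cfnum l) (cfden l) => p q hq hx; field; rewrite hq hx.
Qed.

Lemma head_cf l : 2 <= size l -> all (fun x => 0 < x) l -> 2 <= last 0 l ->
  head 0 l = cfden l %/ cfnum l.
Proof.
case: l => [|x [|y l]] //= _ /andP[x0 hl] hlast.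
have := @cfnum_lt_den (y :: l) hl isT hlast.
by rewrite /cfnum /cfden /= => h; rewrite divnMDl ?divn_small ?addn0 //; lia.
Qed.

Lemma split_last (ms : seq nat) :
  2 <= size ms -> all (fun x => 0 < x) ms -> 2 <= last 0 ms ->
  exists l k, [/\ take (size ms).-1 ms = l, ms = rcons l k,
                 all (fun x => 0 < x) l, l != [::] & 2 <= k].
Proof.
case/lastP: ms => // l k; rewrite size_rcons all_rcons last_rcons ltnS lt0n size_eq0.
move=> lne /andP[_ lpos] k2; exists l, k; split=> //=.
by rewrite -cats1 take_size_cat.
Qed.

Lemma coprime_det (N b P Q : nat) (D : int) :
  (D ^+ 2 = 1 -> (P * b)%:Z - (Q * N)%:Z = D -> coprime N b)%R.
Proof.
move=> D2 det; apply/(coprimezP N b); exists (- (Q%:Z * D), P%:Z * D)%R => /=.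
have -> : (- (Q%:Z * D) * N%:Z + P%:Z * D * b%:Z = D * ((P * b)%:Z - (Q * N)%:Z))%R.
  by rewrite !PoszM; ring.
by rewrite det -expr2.
Qed.

Lemma det_sign (P b Q N : nat) (e : bool) :
  ((P * b)%:Z - (Q * N)%:Z = (-1) ^+ e)%R ->
  if e then N * Q = P * b + 1 else P * b = Q * N + 1.
Proof. by case: e; rewrite ?expr0 ?expr1; lia. Qed.

Lemma compl_det N b0 P Q : 0 < b0 -> P < N -> N * Q = P * b0 + 1 ->
  Q <= b0 /\ (N - P) * b0 = (b0 - Q) * N + 1.
Proof.
move=> b00 PN det.
have Qb : Q <= b0.
  have : N * Q <= N * b0 by rewrite det; nia.
  by rewrite leq_pmul2l //; lia.
split=> //; have : Q * N <= b0 * N by rewrite leq_mul2r Qb orbT.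
by rewrite !mulnBl (mulnC Q N) det; nia.
Qed.

Lemma CS_frac (N b : nat) : 0 < N < b -> coprime N b ->
  CS (N%:R / b%:R) = mkseq (run_len N b) (2 * N).
Proof.
move=> /andP[N0 Nb] cop.
have -> : (N%:R / b%:R = (Posz N)%:~R / (Posz b)%:~R :> rat)%R by [].
rewrite CS_run_len; last first.
  by rewrite divr_gt0 ?ltr0n ?ltr_pdivrMr ?ltr0n ?mul1r ?ltr_nat //; lia.
rewrite coprimeq_num ?coprimeq_den //= gtr0_sg ?mul1r ?ltz_nat //=; last lia.
by rewrite ifF // eqz_nat; lia.
Qed.

Lemma cf_rcons ms t : all (fun x => 0 < x) ms -> 0 < t ->
  cf (rcons ms t) = ((cfnum_prev ms + t * cfnum ms)%:R / (cfden_prev ms + t * cfden ms)%:R)%R.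
Proof. by move=> mspos t0; rewrite cfE ?cfnum_rcons ?cfden_rcons // all_rcons t0. Qed.

Lemma convergent_det l k :
  ((cfnum l * cfden (rcons l k))%:Z - (cfden l * cfnum (rcons l k))%:Z
   = (-1) ^+ (size l).+1)%R.
Proof.
have := cont_det (rcons l k).
by rewrite cfnum_prev_rcons cfden_prev_rcons size_rcons !PoszM => <-; ring.
Qed.

Lemma convergent_bounds l k : all (fun x => 0 < x) l -> l != [::] -> 2 <= k ->
  [/\ 0 < cfnum l < cfnum (rcons l k), 0 < cfden l, cfnum l <= cfden l
    & cfnum (rcons l k) < cfden (rcons l k)].
Proof.
move=> lpos lne k2; have pos : all (fun x => 0 < x) (rcons l k).
  by rewrite all_rcons lpos andbT; lia.
rewrite cfnum_lt_den ?last_rcons -?size_eq0 ?size_rcons //.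
rewrite cfnum_le_den // cfden_gt0 // cfnum_gt0 //= cfnum_rcons.
by split=> //; have := cfnum_gt0 lpos lne; nia.
Qed.

(** * The decomposition of CS(r) *)

(* [drift N b j = (- j * b) mod N]: the gap between [j * b] and the next
   multiple of [N]. *)
Definition drift N b j := N * run_start N b j - j * b.

Section Drift.
Variables (N b : nat).
Hypothesis N0 : 0 < N.

Lemma driftE j : j * b + drift N b j = N * run_start N b j /\ drift N b j < N.
Proof.
have h1 := @leq_mul_ceildiv (j * b) N N0; have h2 := @ltn_mul_ceildiv (j * b) N N0.
by rewrite /drift /run_start; split; lia.
Qed.

Lemma drift_run_len j : N * run_len N b j + drift N b j = b + drift N b j.+1.
Proof.
have [e1 _] := driftE j; have [e2 _] := driftE j.+1.
have := @run_start_mono N b j j.+1 N0 (leqnSn _).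
by rewrite /run_len; nia.
Qed.

Lemma run_len_drift_top j : drift N b j = N.-1 -> run_len N b j <= b %/ N.
Proof.
move=> e; have := drift_run_len j; have [_ t] := driftE j.+1.
by rewrite e leq_divRL // mulnC; lia.
Qed.

Section Inverse.
Variables (l q : nat).
Hypothesis hl : l * b = q * N + 1.

Lemma drift_addl j : 0 < drift N b j -> drift N b (j + l) = (drift N b j).-1.
Proof.
move=> h; have [e1 t1] := driftE j.
have E : run_start N b (j + l) = run_start N b j + q by apply: ceildiv_unique => //; nia.
by rewrite /drift E; nia.
Qed.

Lemma drift_add_compl j : l < N -> drift N b j < N.-1 ->
  drift N b (j + (N - l)) = (drift N b j).+1.
Proof.
move=> lN h; have [e1 t1] := driftE j.
have qb : q < b by nia.
have E : run_start N b (j + (N - l)) = run_start N b j + (b - q).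
  by apply: ceildiv_unique => //; nia.
by rewrite /drift E; nia.
Qed.

Lemma drift_wrap j : drift N b j = 0 -> drift N b (j + l) = N.-1.
Proof.
move=> h; have [e1 t1] := driftE j.
have E : run_start N b (j + l) = run_start N b j + q.+1.
  by apply: ceildiv_unique => //; nia.
by rewrite /drift E; nia.
Qed.

(* Since [l * b = 1 (mod N)], [N] divides [(z' - z) * b] only if it divides [z' - z]. *)
Lemma drift_dvd z z' : z <= z' -> drift N b z = drift N b z' -> N %| z' - z.
Proof.
move=> zz e; have [e1 _] := driftE z; have [e2 _] := driftE z'.
have m := @run_start_mono N b z z' N0 zz.
have d : N %| (z' - z) * b.
  by apply/dvdnP; exists (run_start N b z' - run_start N b z); nia.
have d2 : N %| (z' - z) * q * N + (z' - z).
  by rewrite -mulnA addnC -mulnS -addn1 -hl mulnCA dvdn_mull.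
by rewrite dvdn_addr ?dvdn_mull in d2.
Qed.

Lemma drift_inj z z' : z < z' < z + N -> drift N b z != drift N b z'.
Proof.
move=> /andP[h1 h2]; apply/eqP => /(drift_dvd (ltnW h1)) /dvdn_leq; lia.
Qed.

Lemma drift_eq0_dvd z : drift N b z = 0 -> N %| z.
Proof.
move=> e; rewrite -(subn0 z); apply: (drift_dvd (leq0n z)).
by rewrite e /drift run_start0 // muln0.
Qed.

Lemma drift_hit_ends i l1 l2 x : l1 + l2 = N ->
  (exists2 k, k <= l1 & drift N b (i + k) = x) ->
  (exists2 k, k <= l2 & drift N b (i + l1 + k) = x) ->
  drift N b i = x \/ drift N b (i + l1) = x.
Proof.
move=> sz [k1 k1l e1] [k2 k2l e2].
have [<-|k1l1] := eqVneq k1 l1; first by right.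
have [k10|k1pos] := posnP k1; first by left; rewrite -e1 k10 addn0.
have /negP[] := drift_inj (z := i + k1) (z' := i + l1 + k2) ltac:(lia).
by rewrite e1 e2.
Qed.

Lemma run_len_addl j : 0 < drift N b j -> 0 < drift N b j.+1 ->
  run_len N b (j + l) = run_len N b j.
Proof.
move=> h1 h2; apply/eqP; rewrite -(eqn_pmul2l N0); apply/eqP.
have := drift_run_len (j + l); have := drift_run_len j.
by rewrite -addSn !drift_addl //; lia.
Qed.

Lemma run_len_add_compl j : l < N -> drift N b j < N.-1 -> drift N b j.+1 < N.-1 ->
  run_len N b (j + (N - l)) = run_len N b j.
Proof.
move=> lN h1 h2; apply/eqP; rewrite -(eqn_pmul2l N0); apply/eqP.
have := drift_run_len (j + (N - l)); have := drift_run_len j.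
by rewrite -addSn !drift_add_compl //; lia.
Qed.

End Inverse.

End Drift.

Lemma rot_mkseq_window (f : nat -> nat) n i : periodic f n ->
  exists j, forall k, k < n -> nth 0 (rot i (mkseq f n)) k = f (j + k).
Proof.
move=> fper; case: (leqP i n) => [iN|Ni]; first by exists i => k; apply: nth_rot_mkseq.
by exists 0 => k kn; rewrite rot_oversize ?size_mkseq 1?ltnW // nth_mkseq.
Qed.

Lemma cyc_occ_shift_ge3 (f : nat -> nat) n S i s : periodic f n -> 0 < s < n ->
  size S <= 2 * n ->
  (forall k, k < size S -> nth 0 S k = f (i + k)) ->
  (forall k, k < size S -> f (i + s + k) = f (i + k)) ->
  3 <= cyc_occ (mkseq f (2 * n)) S.
Proof.
move=> fper /andP[s0 sn] Sn hS hs.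
have fper2 : periodic f (2 * n) by move=> x; apply: periodicM.
apply: (cyc_occ_mkseq_ge3 fper2 (j1 := i %% (2 * n)) (j2 := (i + n) %% (2 * n))
          (j3 := (i + s) %% (2 * n))) => //; rewrite ?ltn_mod; try lia.
  have neq x y : 0 < y < 2 * n -> x %% (2 * n) != (x + y) %% (2 * n).
    by move=> hy; rewrite -[x in x %% _]addn0 eqn_modDl mod0n modn_small; lia.
  rewrite /= !inE negb_or andbT neq ?neq //= 1?eq_sym; try lia.
  by rewrite [i + n](_ : _ = i + s + (n - s)) ?neq //; lia.
move=> j k; rewrite !inE => /or3P[] /eqP -> kS; rewrite periodic_modDl // hS //.
- by rewrite addnAC fper.
- by rewrite hs.
Qed.

Section Windows.
Variables (N b l q : nat).
Hypotheses (N0 : 0 < N) (hl : l * b = q * N + 1) (l0 : 0 < l) (lN : l < N).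
Variables (S : seq nat) (i : nat).
Hypothesis SN : size S <= 2 * N.
Hypothesis hS : forall k, k < size S -> nth 0 S k = run_len N b (i + k).
Hypothesis occ2 : cyc_occ (mkseq (run_len N b) (2 * N)) S = 2.

Let rper : periodic (run_len N b) N := run_len_periodic b N0.

(* If the drift never vanishes along the window, shifting it by [l] keeps all
   its run lengths, which would give a third occurrence. *)
Lemma window_drift0 : exists2 k, k <= size S & drift N b (i + k) = 0.
Proof.
have [|/hasPn H] := boolP (has (fun k => drift N b (i + k) == 0) (iota 0 (size S).+1)).
  by case/hasP => k; rewrite mem_iota add0n ltnS => kS /eqP; exists k.
have pos k : k <= size S -> 0 < drift N b (i + k).
  by move=> kS; rewrite lt0n H // mem_iota add0n ltnS.
suff : 3 <= cyc_occ (mkseq (run_len N b) (2 * N)) S by rewrite occ2.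
apply: (cyc_occ_shift_ge3 rper (s := l)) hS _ => //; first by rewrite l0.
move=> k kS; rewrite addnAC (run_len_addl N0 hl) // -?addnS pos //.
exact: ltnW.
Qed.

Lemma window_drift_top : exists2 k, k <= size S & drift N b (i + k) = N.-1.
Proof.
have [|/hasPn H] :=
  boolP (has (fun k => drift N b (i + k) == N.-1) (iota 0 (size S).+1)).
  by case/hasP => k; rewrite mem_iota add0n ltnS => kS /eqP; exists k.
have low k : k <= size S -> drift N b (i + k) < N.-1.
  move=> kS; have [_ t] := driftE b N0 (i + k).
  have := H k; rewrite mem_iota add0n ltnS kS => /(_ isT) /eqP; lia.
suff : 3 <= cyc_occ (mkseq (run_len N b) (2 * N)) S by rewrite occ2.
apply: (cyc_occ_shift_ge3 rper (s := N - l)) hS _ => //; first lia.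
move=> k kS; rewrite addnAC (run_len_add_compl N0 hl) // -?addnS low //.
exact: ltnW.
Qed.

End Windows.

Lemma period_decomposition N b l q i S1 S2 : 1 < N -> l * b = q * N + 1 -> 0 < l < N ->
  rot i (mkseq (run_len N b) (2 * N)) = S1 ++ S2 ++ S1 ++ S2 ->
  cyc_occ (mkseq (run_len N b) (2 * N)) S1 = 2 ->
  cyc_occ (mkseq (run_len N b) (2 * N)) S2 = 2 ->
  head 0 S1 = (b %/ N).+1 -> S1 != [::] -> S2 != [::] ->
  size S1 = l /\ S1 ++ S2 = mkseq (run_len N b) N.
Proof.
move=> N1 hl /andP[l0 lN] Erot occ1 occ2 hd ne1 ne2.
have N0 := ltnW N1; have rper := run_len_periodic b N0.
have sz : size S1 + size S2 = N.
  by have := congr1 size Erot; rewrite size_rot size_mkseq !size_cat; lia.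
have [j] := rot_mkseq_window i (periodicM rper 2); rewrite Erot => hj.
have hS1 k : k < size S1 -> nth 0 S1 k = run_len N b (j + k).
  by move=> hk; rewrite -hj ?nth_cat ?hk //; lia.
have hS2 k : k < size S2 -> nth 0 S2 k = run_len N b (j + size S1 + k).
  move=> hk; rewrite -addnA -hj; last lia.
  by rewrite nth_cat ltnNge leq_addr /= addKn nth_cat hk.
have sS1 : size S1 <= 2 * N by lia.
have sS2 : size S2 <= 2 * N by lia.
have [d0 dtop] : drift N b j = 0 /\ drift N b (j + size S1) = N.-1.
  (* A run of length [(b %/ N).+1] cannot start at drift [N - 1]. *)
  have not_top : drift N b j != N.-1.
    apply/eqP => /(run_len_drift_top N0); rewrite -[j]addn0 -hS1 ?nth0 ?hd ?ltnn //.
    by rewrite lt0n size_eq0.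
  have [top0|top1] := drift_hit_ends N0 hl sz (window_drift_top N0 hl l0 lN sS1 hS1 occ1)
                                        (window_drift_top N0 hl l0 lN sS2 hS2 occ2).
    by rewrite top0 eqxx in not_top.
  have [z0|z1] := drift_hit_ends N0 hl sz (window_drift0 N0 hl l0 lN sS1 hS1 occ1)
                                    (window_drift0 N0 hl l0 lN sS2 hS2 occ2) => //.
  by move: top1; rewrite z1; lia.
have el : size S1 = l.
  have w := drift_wrap N0 hl d0.
  case: (ltngtP (size S1) l) => // h; exfalso.
    by have /negP[] := drift_inj N0 hl (z := j + size S1) (z' := j + l) ltac:(lia);
      rewrite dtop w.
  by have /negP[] := drift_inj N0 hl (z := j + l) (z' := j + size S1) ltac:(lia);
    rewrite dtop w.
split=> //; have /dvdnP[c ej] := drift_eq0_dvd N0 hl d0.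
apply: (@eq_from_nth _ 0); first by rewrite size_cat size_mkseq.
move=> k; rewrite size_cat sz => hk; rewrite nth_mkseq //.
have := hj k; rewrite catA nth_cat size_cat sz hk => -> ; last lia.
by rewrite ej addnC periodicM.
Qed.

(** * Balanced windows *)

Lemma mkseqD (f : nat -> nat) m n :
  mkseq f (m + n) = mkseq f m ++ mkseq (fun i => f (m + i)) n.
Proof. by rewrite /mkseq iotaD map_cat add0n -(addn0 m) iotaDl -map_comp addn0. Qed.

Lemma take_mkseq (f : nat -> nat) k n : k <= n -> take k (mkseq f n) = mkseq f k.
Proof. by move=> kn; rewrite -(subnKC kn) mkseqD take_size_cat ?size_mkseq. Qed.

Lemma dpair_shift (X Y : seq nat) d : X ++ dpair d Y X = dpair d X Y ++ X.
Proof. by rewrite /dpair; elim: d => [|d IH] /=; rewrite ?cats0 // -!catA -IH. Qed.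

Lemma dpairS (X Y : seq nat) d : dpair d.+1 X Y = dpair d X Y ++ X ++ Y.
Proof. by rewrite /dpair -addn1 nseqD flatten_cat /= cats0. Qed.

Section Dpair.
Variables (f : nat -> nat) (N : nat) (X Y : seq nat).
Hypotheses (fper : periodic f N) (EXY : X ++ Y = mkseq f N).

Lemma mkseq_dpair j x : mkseq f (j * N + x) = dpair j X Y ++ mkseq f x.
Proof.
elim: j x => [|j IH] x //=.
rewrite mulSn -addnA mkseqD -EXY /dpair /= -/(dpair j X Y).
rewrite -[((X ++ Y) ++ _) ++ _]catA -IH.
by congr (_ ++ _); apply: eq_mkseq => i; rewrite addnC fper.
Qed.

Lemma window_dpair d : X ++ dpair d Y X ++ Y ++ X = mkseq f ((d + 1) * N + size X).
Proof.
have EX : X = mkseq f (size X).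
  have XN : size X <= N by rewrite -(size_mkseq f N) -EXY size_cat leq_addr.
  by rewrite -(take_mkseq f XN) -EXY take_size_cat.
by rewrite catA dpair_shift -catA (catA X Y X) catA -dpairS addn1 mkseq_dpair -EX.
Qed.

Lemma window_trim d x Xe Xb : x :: Xe = X -> rcons Xb x = X ->
  x :: (Xe ++ dpair d Y X ++ Y ++ Xb) ++ [:: x] = mkseq f ((d + 1) * N + size X).
Proof. by move=> E1 E2; rewrite -window_dpair -!catA cats1 E2 -cat_cons E1. Qed.

End Dpair.

Lemma mkseq_rotate (g : nat -> nat) N (X Y : seq nat) : periodic g N ->
  X ++ Y = mkseq g N -> Y ++ X = mkseq (fun i => g (size X + i)) N.
Proof.
move=> gper E.
have XN : size X <= N by rewrite -(size_mkseq g N) -E size_cat leq_addr.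
move: E; rewrite -[in mkseq g N](subnKC XN) mkseqD => /eqP.
rewrite eqseq_cat ?size_mkseq // => /andP[/eqP EX /eqP ->].
rewrite -[in RHS](subnK XN) mkseqD EX size_mkseq; congr (_ ++ _).
by apply: eq_mkseq => i; rewrite addnA subnKC // addnC gper.
Qed.

Lemma bracket_ratio (u v t : nat) : 0 < u -> 1 < t -> u < t * v ->
  exists d, [/\ 0 < d < t, (d - 1) * v < u, u < (d + 1) * v & d + 1 <= 2 * u].
Proof.
move=> u0 t1 utv; have v0 : 0 < v by case: v utv; rewrite ?muln0.
have [uv|vu] := ltnP u v; first by exists 1; split=> //; lia.
exists (u %/ v); split.
- by rewrite divn_gt0 // vu ltn_divLR.
- by have := leq_divM u v; nia.
- by rewrite addn1 ltn_ceil.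
- by have := leq_div u v; lia.
Qed.

Local Open Scope ring_scope.

Lemma sumn_take_ends (x y x' y' : nat) (M : seq nat) k : (k <= size M + 2)%N ->
  (sumn (take k (x' :: M ++ [:: y'])))%:Z =
  (sumn (take k (x :: M ++ [:: y])))%:Z + (x'%:Z - x%:Z) * (0 < k)%N%:Z
   + (y'%:Z - y%:Z) * (k == size M + 2)%N%:Z.
Proof.
case: k => [|k] hk; first by rewrite addn2 /= !mulr0 !addr0.
rewrite /= mulr1; case: (ltnP k (size M).+1) => h.
  rewrite (_ : (k.+1 == size M + 2) = false) ?mulr0 ?addr0; last by apply/negbTE; lia.
  rewrite !take_cat; case: ltnP => h2; first by rewrite !PoszD; ring.
  by rewrite (_ : k = size M) ?subnn /= ?PoszD; [ring | lia].
rewrite (_ : k = (size M).+1) ?addn2 ?eqxx ?mulr1; last lia.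
by rewrite !take_oversize ?size_cat /= ?addn1 // !sumn_cat /= !PoszD; ring.
Qed.

(* Since [P * b0 - Q * N = D = +-1], the point [(a, b)] has integer
   coordinates [(u, v)] in the basis [(N, b0), (P, Q)]; the two sign
   conditions, which say that [a / b] lies strictly between [P / Q] and
   [(P + t N) / (Q + t b0)], make them positive with [u < t * v]. *)
Lemma farey_coords (N b0 P Q a b t : nat) (D : int) :
  D ^+ 2 = 1 -> P%:Z * b0%:Z - Q%:Z * N%:Z = D ->
  0 < D * (P%:Z * b%:Z - a%:Z * Q%:Z) ->
  0 < D * (a%:Z * (Q + t * b0)%N%:Z - b%:Z * (P + t * N)%N%:Z) ->
  exists u v : nat, [/\ (0 < u)%N, (0 < v)%N, (u < t * v)%N, a = (u * N + v * P)%N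
                      & (N * b)%N%:Z + v%:Z * D = (b0 * a)%N%:Z].
Proof.
move=> D2 det hu hv.
set u := D * _ in hu; set v := D * (a%:Z * b0%:Z - N%:Z * b%:Z).
have tv : u < t%:Z * v.
  rewrite -subr_gt0 (_ : _ - _ = D * (a%:Z * (Q + t * b0)%N%:Z - b%:Z * (P + t * N)%N%:Z)) //.
  by rewrite /u /v !PoszD !PoszM; ring.
have v0 : 0 < v by nia.
have [u0 v0'] : 0 <= u /\ 0 <= v by split; apply: ltW.
exists `|u|%N, `|v|%N; split.
- by rewrite -ltz_nat gez0_abs.
- by rewrite -ltz_nat gez0_abs.
- by rewrite -ltz_nat PoszM !gez0_abs.
- apply/eqP; rewrite -eqz_nat PoszD !PoszM !gez0_abs //; apply/eqP.
  have -> : u * N%:Z + v * P%:Z = D * a%:Z * (P%:Z * b0%:Z - Q%:Z * N%:Z) by rewrite /u /v; ring.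
  by rewrite det mulrAC -expr2 D2 mul1r.
rewrite gez0_abs //.
have -> : (N * b)%N%:Z + v * D = D ^+ 2 * (a%:Z * b0%:Z) + (1 - D ^+ 2) * (N%:Z * b%:Z).
  by rewrite /v PoszM; ring.
by rewrite D2 mul1r subrr mul0r addr0 PoszM mulrC.
Qed.

(* [C] stands for the run start [run_start N b0 k] (shifted by [l] in the odd
   case) and [t] for its drift, so that [N * C = k * b0 + t]; the lemmas compute
   [a * (partial sum of the trimmed window) - k * b] from these. *)
Section Gaps.
Variables (N b0 l q a b u v d : int).
Hypotheses (N2 : 2 <= N) (l1 : 1 <= l) (lN : l < N) (hl : l * b0 = q * N + 1).
Hypotheses (u1 : 1 <= u) (v1 : 1 <= v).
Hypotheses (hd1 : (d - 1) * v < u) (hd2 : u < (d + 1) * v).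

Let N0 : N != 0. Proof. by apply/eqP => e; move: N2; rewrite e. Qed.

Section Even.
Hypotheses (ha : a = u * N + v * l) (hb : N * b + v = b0 * a).
Let L := (d + 1) * N + l.

Lemma even_gap_mid k C t : 1 <= d -> 1 <= k -> k <= L - 1 ->
  N * C = k * b0 + t -> 0 <= t -> t < N ->
  [/\ v - a <= a * (C - 1) - k * b, a * (C - 1) - k * b < v
    & a * (C - 1) - k * b < (d + 1) * v - u].
Proof.
move=> d1 k1 kL hC t0 tN.
set w := l * C - k * q.
have Ew : N * w = l * t + k.
  have -> : N * w = l * (N * C) - k * (q * N) by rewrite /w; ring.
  by rewrite hC (_ : q * N = l * b0 - 1); [ring | rewrite hl; ring].
have -> : a * (C - 1) - k * b = u * t + v * w - a.
  apply: (mulfI N0).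
  have -> : N * (a * (C - 1) - k * b) = a * (N * C) - N * a - k * (N * b) by ring.
  rewrite hC (_ : N * b = b0 * a - v); last by rewrite -hb; ring.
  have -> : N * (u * t + v * w - a) = N * u * t + v * (N * w) - N * a by ring.
  by rewrite Ew ha; ring.
have lt : 0 <= l * t <= l * (N - 1) by rewrite mulr_ge0 ?ler_pM2l //=; lia.
have w1 : 1 <= w.
  have : 0 < N * w by rewrite Ew; lia.
  by rewrite pmulr_rgt0; lia.
have w2 : w <= l + d.
  have : N * w < N * (l + d + 1) by rewrite Ew; rewrite /L in kL; lia.
  by rewrite ltr_pM2l; lia.
have ut : 0 <= u * t <= u * (N - 1) by rewrite mulr_ge0 ?ler_pM2l //=; lia.
have vw : v <= v * w <= v * (l + d).
  by rewrite -{1}(mulr1 v) !ler_pM2l //=; lia.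
by split; lia.
Qed.

Lemma even_gap_end C : N * C = L * b0 + (N - 1) ->
  [/\ a * (C - 2) - L * b = (d + 1) * v - u - a, a * (C - 2) - L * b < v
    & a * (C - 2) - L * b < (d + 1) * v - u].
Proof.
move=> hC.
have -> : a * (C - 2) - L * b = (d + 1) * v - u - a.
  apply: (mulfI N0).
  have -> : N * (a * (C - 2) - L * b) = a * (N * C) - 2 * N * a - L * (N * b) by ring.
  rewrite hC (_ : N * b = b0 * a - v); last by rewrite -hb; ring.
  by rewrite /L ha; ring.
have h1 : v <= v * l by rewrite -{1}(mulr1 v) ler_pM2l; lia.
have h2 : 0 < u * N by apply: mulr_gt0; lia.
by split; lia.
Qed.

End Even.

Section Odd.
Variables (P C0 : int).
Hypotheses (hP : P = N - l) (ha : a = u * N + v * P) (hb : N * b = b0 * a + v).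
Hypothesis hC0 : C0 = q + 1.
Let L := (d + 1) * N + P.

Lemma odd_gap_mid k C t : 1 <= d -> 1 <= k -> k <= L - 1 ->
  N * C = (l + k) * b0 + t -> 0 <= t -> t < N ->
  [/\ v - a <= - (a * (C - C0 + 1) - k * b), - (a * (C - C0 + 1) - k * b) < v
    & - (a * (C - C0 + 1) - k * b) < (d + 1) * v - u].
Proof.
move=> d1 k1 kL hC t0 tN.
set m := N - 1 - t.
set w := N - 1 - t - l + l * C - (l + k) * q.
have Ew : N * w = k + P * m.
  have -> : N * w = N * (N - 1 - t - l) + l * (N * C) - (l + k) * (q * N) by rewrite /w; ring.
  rewrite hC (_ : q * N = l * b0 - 1); last by rewrite hl; ring.
  by rewrite hP /m; ring.
have -> : a * (C - C0 + 1) - k * b = a - u * m - v * w.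
  apply: (mulfI N0).
  have -> : N * (a * (C - C0 + 1) - k * b) = a * (N * C) - a * N * q - k * (N * b).
    by rewrite hC0; ring.
  rewrite hC hb.
  have -> : N * (a - u * m - v * w) = N * a - N * u * m - v * (N * w) by ring.
  have -> : (l + k) * b0 = l * b0 + k * b0 by ring.
  by rewrite Ew ha /m hP hl; ring.
have m0 : 0 <= m <= N - 1 by rewrite /m; lia.
have P1 : 1 <= P by lia.
have lt : 0 <= P * m <= P * (N - 1) by rewrite mulr_ge0 ?ler_pM2l //=; lia.
have w1 : 1 <= w.
  have : 0 < N * w by rewrite Ew; lia.
  by rewrite pmulr_rgt0; lia.
have w2 : w <= P + d.
  have : N * w < N * (P + d + 1) by rewrite Ew; rewrite /L in kL; lia.
  by rewrite ltr_pM2l; lia.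
have um : 0 <= u * m <= u * (N - 1) by rewrite mulr_ge0 ?ler_pM2l //=; lia.
have vw : v <= v * w <= v * (P + d).
  by rewrite -{1}(mulr1 v) !ler_pM2l //=; lia.
by split; lia.
Qed.

Lemma odd_gap_end C : N * C = (l + L) * b0 ->
  [/\ - (a * (C - C0 + 2) - L * b) = (d + 1) * v - u - a,
      - (a * (C - C0 + 2) - L * b) < v
    & - (a * (C - C0 + 2) - L * b) < (d + 1) * v - u].
Proof.
move=> hC.
have -> : a * (C - C0 + 2) - L * b = a + u - (d + 1) * v.
  apply: (mulfI N0).
  have -> : N * (a * (C - C0 + 2) - L * b) = a * (N * C) - a * N * q + a * N - L * (N * b).
    by rewrite hC0; ring.
  rewrite hC hb; have -> : (l + L) * b0 = l * b0 + L * b0 by ring.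
  by rewrite hl /L ha hP; ring.
have h1 : v <= v * P by rewrite -{1}(mulr1 v) ler_pM2l; lia.
have h2 : 0 < u * N by apply: mulr_gt0; lia.
by split; lia.
Qed.

End Odd.

End Gaps.

Local Close Scope ring_scope.

Lemma even_balanced (N b0 P Q a b u v d : nat) : 1 < N -> 0 < P < N ->
  P * b0 = Q * N + 1 -> a = u * N + v * P -> N * b + v = b0 * a ->
  0 < u -> 0 < v -> 0 < d -> (d - 1) * v < u -> u < (d + 1) * v ->
  exists G : int, forall k, k <= (d + 1) * N + P ->
    (0 <= a%:Z * ((run_start N b0 k)%:Z - (0 < k)%:Z - (k == (d + 1) * N + P)%:Z)
          - (k * b)%:Z - G < a%:Z)%R.
Proof.
move=> N1 /andP[P0 PN] det ha hb u0 v0 d0 hd1 hd2.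
have N0 : 0 < N by lia.
have va : v <= a by rewrite ha (leq_trans _ (leq_addl _ _)) // leq_pmulr.
have hd1z : ((d%:Z - 1) * v%:Z < u%:Z)%R by rewrite (subzn d0) -PoszM ltz_nat.
have hd2z : (u%:Z < (d%:Z + 1) * v%:Z)%R by rewrite -PoszD -PoszM ltz_nat.
set L := (d + 1) * N + P.
(* [G = min (v - a) ((d + 1) * v - u - a)]. *)
exists (if (u <= d * v)%N then v%:Z - a%:Z else (d%:Z + 1) * v%:Z - u%:Z - a%:Z)%R => k kL.
have [k0|kpos] := posnP k.
  rewrite k0 run_start0 // (_ : (0 == L) = false) /=; last by lia.
  by case: leqP => h; lia.
have [kL'|kL'] := eqVneq k L.
  have CL : run_start N b0 L = (d + 1) * b0 + Q + 1.
    have e : L * b0 = (d + 1) * b0 * N + Q * N + 1.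
      by rewrite /L mulnDl det (mulnAC (d + 1)) addnA.
    by apply: ceildiv_unique => //; rewrite e !mulnDl; lia.
  have [c1 c2 c3] := @even_gap_end (Posz N) (Posz b0) (Posz P) (Posz Q)
    (Posz a) (Posz b) (Posz u) (Posz v) (Posz d)
    ltac:(lia) ltac:(lia) ltac:(lia) ltac:(lia) ltac:(lia) ltac:(lia) hd1z hd2z
    ltac:(lia) ltac:(lia) (Posz (run_start N b0 L)) ltac:(rewrite CL; lia).
  by rewrite kL'; case: leqP => h; lia.
have [e t] := driftE b0 N0 k.
have [c1 c2 c3] := @even_gap_mid (Posz N) (Posz b0) (Posz P) (Posz Q)
    (Posz a) (Posz b) (Posz u) (Posz v) (Posz d)
    ltac:(lia) ltac:(lia) ltac:(lia) ltac:(lia) ltac:(lia) ltac:(lia) hd1z hd2z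
    ltac:(lia) ltac:(lia) (Posz k) (Posz (run_start N b0 k)) (Posz (drift N b0 k))
    ltac:(lia) ltac:(lia) ltac:(lia) ltac:(lia) ltac:(lia) ltac:(lia).
by case: leqP => h; lia.
Qed.

Lemma odd_balanced (N b0 P Q a b u v d : nat) : 1 < N -> 0 < b0 -> 0 < P < N ->
  N * Q = P * b0 + 1 -> a = u * N + v * P -> N * b = b0 * a + v ->
  0 < u -> 0 < v -> 0 < d -> (d - 1) * v < u -> u < (d + 1) * v ->
  exists G : int, forall k, k <= (d + 1) * N + P ->
    (0 <= a%:Z * ((run_start N b0 (N - P + k))%:Z - (b0 - Q + 1)%:Z
                  + (0 < k)%:Z + (k == (d + 1) * N + P)%:Z)
          - (k * b)%:Z - G < a%:Z)%R.
Proof.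
move=> N1 b00 /andP[P0 PN] det ha hb u0 v0 d0 hd1 hd2.
have N0 : 0 < N by lia.
have [Qb hl] := compl_det b00 PN det.
have va : v <= a by rewrite ha (leq_trans _ (leq_addl _ _)) // leq_pmulr.
have hd1z : ((d%:Z - 1) * v%:Z < u%:Z)%R by rewrite (subzn d0) -PoszM ltz_nat.
have hd2z : (u%:Z < (d%:Z + 1) * v%:Z)%R by rewrite -PoszD -PoszM ltz_nat.
have Clam : run_start N b0 (N - P) = b0 - Q + 1.
  by apply: ceildiv_unique => //; rewrite mulnDl hl; lia.
set L := (d + 1) * N + P.
(* The balance quantities are the negatives of those of [odd_gap_mid], hence
   the reflected window. *)
exists (- (if (u <= d * v)%N then v%:Z - a%:Z else (d%:Z + 1) * v%:Z - u%:Z - a%:Z)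
        - a%:Z + 1)%R => k kL.
have [k0|kpos] := posnP k.
  rewrite k0 addn0 Clam (_ : (0 == L) = false) /=; last by lia.
  by case: leqP => h; lia.
have [kL'|kL'] := eqVneq k L.
  have CL : N * run_start N b0 (N - P + L) = (N - P + L) * b0.
    have e : N - P + L = (d + 2) * N by rewrite /L; lia.
    by rewrite e (@run_start_mull N b0 (d + 2) N0) mulnCA mulnA.
  have [c1 c2 c3] := @odd_gap_end (Posz N) (Posz b0) (Posz (N - P)) (Posz (b0 - Q))
    (Posz a) (Posz b) (Posz u) (Posz v) (Posz d)
    ltac:(lia) ltac:(lia) ltac:(lia) ltac:(lia) ltac:(lia) ltac:(lia) hd1z hd2z
    (Posz P) (Posz (b0 - Q + 1)) ltac:(lia) ltac:(lia) ltac:(lia) ltac:(lia)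
    (Posz (run_start N b0 (N - P + L))) ltac:(lia).
  by rewrite kL'; case: leqP => h; lia.
have [e t] := driftE b0 N0 (N - P + k).
have [c1 c2 c3] := @odd_gap_mid (Posz N) (Posz b0) (Posz (N - P)) (Posz (b0 - Q))
    (Posz a) (Posz b) (Posz u) (Posz v) (Posz d)
    ltac:(lia) ltac:(lia) ltac:(lia) ltac:(lia) ltac:(lia) ltac:(lia) hd1z hd2z
    (Posz P) (Posz (b0 - Q + 1)) ltac:(lia) ltac:(lia) ltac:(lia) ltac:(lia)
    (Posz k) (Posz (run_start N b0 (N - P + k))) (Posz (drift N b0 (N - P + k)))
    ltac:(lia) ltac:(lia) ltac:(lia) ltac:(lia) ltac:(lia) ltac:(lia).
by case: leqP => h; lia.
Qed.

Lemma even_block (N b0 P Q a b u v d : nat) (S1 S2 : seq nat) m S1e S1b :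
  1 < N -> 0 < P < N -> P * b0 = Q * N + 1 -> 0 < a -> a <= b -> coprime a b ->
  a = u * N + v * P -> N * b + v = b0 * a ->
  0 < u -> 0 < v -> 0 < d -> (d - 1) * v < u -> u < (d + 1) * v -> d + 1 <= 2 * u ->
  size S1 = P -> S1 ++ S2 = mkseq (run_len N b0) N ->
  m.+1 :: S1e = S1 -> rcons S1b m.+1 = S1 ->
  cyc_contains (mkseq (run_len a b) (2 * a))
    (m :: S1e ++ dpair d S2 S1 ++ S2 ++ S1b ++ [:: m]).
Proof.
move=> N1 PN det a0 ab cop ha hb u0 v0 d0 hd1 hd2 hd3 sS1 ES E1 E2.
have N0 : 0 < N by lia.
have [G hG] := even_balanced N1 PN det ha hb u0 v0 d0 hd1 hd2.
set L := (d + 1) * N + P in hG.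
set M := S1e ++ dpair d S2 S1 ++ S2 ++ S1b.
have EU : m.+1 :: M ++ [:: m.+1] = mkseq (run_len N b0) L.
  by rewrite /L -sS1 -(window_trim (run_len_periodic b0 N0) ES d E1 E2).
have sM : size M + 2 = L.
  by have := congr1 size EU; rewrite size_mkseq /= size_cat /= addn1 addn2.
rewrite (_ : m :: _ = m :: M ++ [:: m]); last by rewrite /M -!catA.
apply: (cyc_contains_balanced (G := G)) => //.
  by rewrite /= size_cat /= addn1 -addn2 sM /L ha; nia.
move=> k; rewrite /= size_cat /= addn1 -addn2 sM => kL.
rewrite (sumn_take_ends m.+1 m.+1); last by rewrite sM.
rewrite EU sM take_mkseq // -[mkseq (run_len N b0) k]/(mkseq (fun i => run_len N b0 (0 + i)) k).
rewrite sumn_run_len // run_start0 // subn0.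
by have := hG k kL; rewrite -/L add0n; lia.
Qed.

Lemma odd_block (N b0 P Q a b u v d : nat) (S1 S2 : seq nat) m S2e S2b :
  1 < N -> 0 < b0 -> 0 < P < N -> N * Q = P * b0 + 1 -> 0 < a -> a <= b -> coprime a b ->
  a = u * N + v * P -> N * b = b0 * a + v ->
  0 < u -> 0 < v -> 0 < d -> (d - 1) * v < u -> u < (d + 1) * v -> d + 1 <= 2 * u ->
  size S1 = N - P -> S1 ++ S2 = mkseq (run_len N b0) N ->
  m :: S2e = S2 -> rcons S2b m = S2 ->
  cyc_contains (mkseq (run_len a b) (2 * a))
    (m.+1 :: S2e ++ dpair d S1 S2 ++ S1 ++ S2b ++ [:: m.+1]).
Proof.
move=> N1 b00 PN det a0 ab cop ha hb u0 v0 d0 hd1 hd2 hd3 sS1 ES E1 E2.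
have N0 : 0 < N by lia.
have [G hG] := odd_balanced N1 b00 PN det ha hb u0 v0 d0 hd1 hd2.
set L := (d + 1) * N + P in hG.
pose f i := run_len N b0 (N - P + i).
have fper : periodic f N by move=> x; rewrite /f addnA run_len_periodic.
have sS2 : size S2 = P.
  by have := congr1 size ES; rewrite size_cat size_mkseq sS1; lia.
set M := S2e ++ dpair d S1 S2 ++ S1 ++ S2b.
have EU : m :: M ++ [:: m] = mkseq f L.
  have ES21 : S2 ++ S1 = mkseq f N.
    by rewrite (mkseq_rotate (run_len_periodic b0 N0) ES) sS1.
  by rewrite /L -sS2 -(window_trim fper ES21 d E1 E2).
have sM : size M + 2 = L.
  by have := congr1 size EU; rewrite size_mkseq /= size_cat /= addn1 addn2.
rewrite (_ : m.+1 :: _ = m.+1 :: M ++ [:: m.+1]); last by rewrite /M -!catA.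
apply: (cyc_contains_balanced (G := G)) => //.
  by rewrite /= size_cat /= addn1 -addn2 sM /L ha; nia.
move=> k; rewrite /= size_cat /= addn1 -addn2 sM => kL.
rewrite (sumn_take_ends m m); last by rewrite sM.
rewrite EU sM take_mkseq // sumn_run_len //.
have [Qb hl] := compl_det b00 (proj2 (andP PN)) det.
have Clam : run_start N b0 (N - P) = b0 - Q + 1.
  by apply: ceildiv_unique => //; rewrite mulnDl hl; lia.
have mono := @run_start_mono N b0 (N - P) (N - P + k) N0 (leq_addr _ _).
rewrite Clam in mono *.
by rewrite -(subzn mono); have := hG k kL; rewrite /L; lia.
Qed.

Lemma ltq_frac_nat (x y z w : nat) : 0 < y -> 0 < w ->
  ((x%:R / y%:R : rat) < z%:R / w%:R)%R = (x * w < z * y).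
Proof.
move=> y0 w0; rewrite ltr_pdivrMr ?ltr0n // mulrAC ltr_pdivlMr ?ltr0n //.
by rewrite -!natrM ltr_nat.
Qed.

Lemma even_case (N b0 P Q n : nat) (S1 S2 : seq nat) m (s : rat) S1e S1b :
  1 < N -> 0 < P < N -> P <= Q -> P * b0 = Q * N + 1 -> 1 < n ->
  size S1 = P -> S1 ++ S2 = mkseq (run_len N b0) N ->
  m.+1 :: S1e = S1 -> rcons S1b m.+1 = S1 ->
  ((P + (2 * n - 2) * N)%:R / (Q + (2 * n - 2) * b0)%:R < s < P%:R / Q%:R)%R ->
  exists d, 1 <= d <= 2 * n - 3 /\
    cyc_contains (CS s) (m :: S1e ++ dpair d S2 S1 ++ S2 ++ S1b ++ [:: m]).
Proof.
move=> N1 PN PQ det n1 sS1 ES E1 E2 /andP[hs1 hs2].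
set t := 2 * n - 2 in hs1.
have s01 : (0 < s < 1)%R.
  rewrite (le_lt_trans _ hs1) ?divr_ge0 ?ler0n //= (lt_le_trans hs2) //.
  by rewrite ler_pdivrMr ?ltr0n ?mul1r ?ler_nat //; lia.
have [a0 ab Es] := num_den_frac s01; rewrite CS_run_len //.
have cop := coprime_num_den s.
set a := `|numq s|%N in a0 ab Es cop *; set b := `|denq s|%N in ab Es cop *.
rewrite Es !ltq_frac_nat in hs1 hs2; try lia.
have [u [v [u0 v0 uv ha hb]]] := @farey_coords N b0 P Q a b t 1 (expr1n _ _)
  ltac:(lia) ltac:(lia) ltac:(lia).
have [d [/andP[d0 dt] hd1 hd2 hd3]] := @bracket_ratio u v t u0 ltac:(lia) uv.
exists d; split; first lia.
apply: (@even_block N b0 P Q a b u v d S1 S2 m S1e S1b) => //.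
- exact: ltnW.
- lia.
Qed.

Lemma odd_case (N b0 P Q n : nat) (S1 S2 : seq nat) m (s : rat) S2e S2b :
  1 < N -> 0 < P < N -> 0 < Q -> N <= b0 -> N * Q = P * b0 + 1 -> 1 < n ->
  size S1 = N - P -> S1 ++ S2 = mkseq (run_len N b0) N ->
  m :: S2e = S2 -> rcons S2b m = S2 ->
  (P%:R / Q%:R < s < (P + (2 * n - 2) * N)%:R / (Q + (2 * n - 2) * b0)%:R)%R ->
  exists d, 1 <= d <= 2 * n - 3 /\
    cyc_contains (CS s) (m.+1 :: S2e ++ dpair d S1 S2 ++ S1 ++ S2b ++ [:: m.+1]).
Proof.
move=> N1 PN Q0 Nb det n1 sS1 ES E1 E2 /andP[hs1 hs2].
set t := 2 * n - 2 in hs2.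
have s01 : (0 < s < 1)%R.
  rewrite (le_lt_trans _ hs1) ?divr_ge0 ?ler0n //= (lt_le_trans hs2) //.
  by rewrite ler_pdivrMr ?ltr0n ?mul1r ?ler_nat; nia.
have [a0 ab Es] := num_den_frac s01; rewrite CS_run_len //.
have cop := coprime_num_den s.
set a := `|numq s|%N in a0 ab Es cop *; set b := `|denq s|%N in ab Es cop *.
rewrite Es !ltq_frac_nat in hs1 hs2; try lia.
have [u [v [u0 v0 uv ha hb]]] := @farey_coords N b0 P Q a b t (-1) (etrans (sqrrN 1) (expr1n _ _))
  ltac:(lia) ltac:(lia) ltac:(lia).
have [d [/andP[d0 dt] hd1 hd2 hd3]] := @bracket_ratio u v t u0 ltac:(lia) uv.
exists d; split; first lia.
apply: (@odd_block N b0 P Q a b u v d S1 S2 m S2e S2b) => //.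
- lia.
- exact: ltnW.
- lia.
Qed.

Theorem lemma2p5 (r : rat) (ms : seq nat) (n : nat) (S1 S2 : seq nat) :
  (0 < r < 1)%R ->
  (forall p : nat, (2 <= p)%N -> r != ((p%:R : rat)^-1)%R) ->
  r = cf ms ->
  (2 <= size ms)%N ->
  all (fun mi => 0 < mi)%N ms ->
  (2 <= last 0%N ms)%N ->
  (2 <= n)%N ->
  let m := head 0%N ms in
  (exists i, rot i (CS r) = S1 ++ S2 ++ S1 ++ S2) ->
  rev S1 = S1 -> rev S2 = S2 ->
  cyc_occ (CS r) S1 = 2%N -> cyc_occ (CS r) S2 = 2%N ->
  head 0%N S1 = m.+1 -> last 0%N S1 = m.+1 -> S1 != [::] ->
  head 0%N S2 = m -> last 0%N S2 = m -> S2 != [::] ->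
  (~~ odd (size ms) ->
   forall (s : rat) (S1e S1b : seq nat),
     m.+1 :: S1e = S1 -> rcons S1b m.+1 = S1 ->
     (cf (rcons ms (2 * n - 2)%N) < s < cf (take (size ms).-1 ms))%R ->
     exists d : nat, (1 <= d <= 2 * n - 3)%N /\
       cyc_contains (CS s) (m :: S1e ++ dpair d S2 S1 ++ S2 ++ S1b ++ [:: m]))
  /\
  (odd (size ms) ->
   forall (s : rat) (S2e S2b : seq nat),
     m :: S2e = S2 -> rcons S2b m = S2 ->
     (cf (take (size ms).-1 ms) < s < cf (rcons ms (2 * n - 2)%N))%R ->
     exists d : nat, (1 <= d <= 2 * n - 3)%N /\
       cyc_contains (CS s) (m.+1 :: S2e ++ dpair d S1 S2 ++ S1 ++ S2b ++ [:: m.+1])).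
Proof.
move=> r01 _ rcf ms2 mspos mslast n2 m [i Erot] _ _ occ1 occ2 hd1 _ ne1 _ _ ne2.
have hm : m = cfden ms %/ cfnum ms by apply: head_cf.
have [l [k [-> Ems lpos lne k2]]] := split_last ms2 mspos mslast; subst ms.
set N := cfnum (rcons l k) in hm *; set b0 := cfden (rcons l k) in hm *.
set P := cfnum l; set Q := cfden l.
have [PN0 Q0 PQ Nb] := convergent_bounds lpos lne k2; have /andP[P0 PN] := PN0.
have det := convergent_det l k; rewrite -/N -/b0 -/P -/Q in det.
have CSr : CS r = mkseq (run_len N b0) (2 * N).
  rewrite rcf cfE // CS_frac ?Nb ?(ltn_trans P0 PN) //.
  exact: coprime_det (sqrr_sign _ _) det.
rewrite CSr in Erot occ1 occ2.
have N1 : 1 < N := leq_ltn_trans P0 PN.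
have t0 : 0 < 2 * n - 2 by rewrite subn_gt0 -{1}(muln1 2) ltn_pmul2l.
rewrite hm in hd1; rewrite cf_rcons ?cfnum_prev_rcons ?cfden_prev_rcons ?cfE //.
rewrite -signr_odd in det; rewrite size_rcons.
split=> [ev s S1e S1b E1 E2 hs | od s S2e S2b E1 E2 hs].
  have hl : P * b0 = Q * N + 1 by move: (det_sign det); rewrite (negbTE ev).
  have [sS1 ES] := period_decomposition N1 hl PN0 Erot occ1 occ2 hd1 ne1 ne2.
  exact: (even_case N1 PN0 PQ hl n2 sS1 ES E1 E2 hs).
have hl : N * Q = P * b0 + 1 by move: (det_sign det); rewrite od.
have [_ hl'] := compl_det (ltn_trans (ltn_trans P0 PN) Nb) PN hl.
have lam : 0 < N - P < N by rewrite subn_gt0 PN ltn_subrL P0 (ltnW N1).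
have [sS1 ES] := period_decomposition N1 hl' lam Erot occ1 occ2 hd1 ne1 ne2.
exact: (odd_case N1 PN0 Q0 (ltnW Nb) hl n2 sS1 ES E1 E2 hs).
Qed.
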